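(* Let $\Phi$ be a second-order constraint problem with model $(J,\xi)$. Then there exists a second-order substitution $\xi_r$ such that $(J,\xi_r)$ is a model of $\Phi$ and $\mathrm{Var}(\xi_r(\alpha))\subseteq\mathrm{SV}(\alpha)$ for every second-order variable $\alpha$ occurring in $\Phi$.
   Context: Index terms over index variables $i$ and index symbols $g$ (including $0,\mathsf s,+$); an interpretation $J$ maps each $k$-ary $g$ to a total weakly monotone function $\mathbb N^k\to\mathbb N$ ($0,\mathsf s,+$ as zero, successor, addition); $a\le_J b$ iff $[a]^\beta_J\le[b]^\beta_J$ for every assignment $\beta$ of naturals to index variables. Second-order index terms: $a::=i\mid\alpha\mid g(a_1,\dots,a_{\mathrm{ar}(g)})$ where $\alpha$ ranges over a countably infinite set of second-order index variables; $\mathrm{Var}(a)$ is the set of (first-order) index variables and $\mathrm{SOVar}(a)$ the set of second-order variables of $a$. A second-order constraint problem (SOCP) $\Phi$ is a set of inequality constraints $a\le b$ (second-order index terms) and occurrence constraints $i\notin\alpha$. A second-order substitution $\xi$ maps second-order variables to index terms containing no second-order variables. $(J,\xi)$ is a model of $\Phi$ if $a\xi\le_J b\xi$ for every inequality $a\le b\in\Phi$ and $i\notin\mathrm{Var}(\xi(\alpha))$ for every occurrence constraint $i\notin\alpha\in\Phi$. Skolem variables: for the second-order variables $\beta$ of $\Phi$, let $V(\beta)$ be the least sets of index variables such that for every $(a\le b)\in\Phi$ with $\beta\in\mathrm{SOVar}(b)$: $\mathrm{Var}(a)\subseteq V(\beta)$, and $V(\alpha)\subseteq V(\beta)$ for every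 $\alpha\in\mathrm{SOVar}(a)$. Then $\mathrm{SV}(\beta)=V(\beta)\setminus\{i\mid(i\notin\beta)\in\Phi\}$. *)

From Stdlib Require List.
From mathcomp Require Import all_boot.
Set Implicit Arguments. Unset Strict Implicit. Unset Printing Implicit Defensive.

(* The built-in symbols 0, s, +
   have dedicated constructors; every other index symbol is named by a nat g
   and applied to a list of arguments (its arity is given by a signature
   ar : nat -> nat, see [wf]). *)
Inductive iterm : Type :=
| IVar  of nat
| ISO   of nat
| IZero
| ISucc of iterm
| IPlus of iterm & iterm
| IFun  of nat & seq iterm.

Fixpoint wf (ar : nat -> nat) (t : iterm) : bool :=
  match t with
  | IVar _ | ISO _ | IZero => true
  | ISucc a => wf ar a
  | IPlus a b => wf ar a && wf ar b
  | IFun g ts => (size ts == ar g) && all (wf ar) ts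
  end.

Fixpoint hasVar (i : nat) (t : iterm) : bool :=
  match t with
  | IVar j => j == i
  | ISO _ | IZero => false
  | ISucc a => hasVar i a
  | IPlus a b => hasVar i a || hasVar i b
  | IFun _ ts => has (hasVar i) ts
  end.

Fixpoint hasSO (al : nat) (t : iterm) : bool :=
  match t with
  | ISO b => b == al
  | IVar _ | IZero => false
  | ISucc a => hasSO al a
  | IPlus a b => hasSO al a || hasSO al b
  | IFun _ ts => has (hasSO al) ts
  end.

Fixpoint subst (xi : nat -> iterm) (t : iterm) : iterm :=
  match t with
  | IVar j => IVar j
  | ISO b => xi b
  | IZero => IZero
  | ISucc a => ISucc (subst xi a)
  | IPlus a b => IPlus (subst xi a) (subst xi b)
  | IFun g ts => IFun g (map (subst xi) ts)
  end.

Definition interp := nat -> seq nat -> nat.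

Definition weakly_monotone (ar : nat -> nat) (J : interp) : Prop :=
  forall g (xs ys : seq nat), size xs = ar g -> size ys = ar g ->
    all2 leq xs ys -> J g xs <= J g ys.

(* [a]^beta_J ; second-order variables (never present after applying a
   second-order substitution) are given the dummy value 0. *)
Fixpoint eval (J : interp) (beta : nat -> nat) (t : iterm) : nat :=
  match t with
  | IVar j => beta j
  | ISO _ => 0
  | IZero => 0
  | ISucc a => (eval J beta a).+1
  | IPlus a b => eval J beta a + eval J beta b
  | IFun g ts => J g (map (eval J beta) ts)
  end.

Definition leJ (J : interp) (a b : iterm) : Prop :=
  forall beta : nat -> nat, eval J beta a <= eval J beta b.

Inductive constr : Type :=
| Ineq of iterm & iterm
| NotOcc of nat & nat.

Definition socp := seq constr.

Definition wf_socp (ar : nat -> nat) (Phi : socp) : Prop :=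
  forall a b, List.In (Ineq a b) Phi -> wf ar a /\ wf ar b.

Definition so_subst (ar : nat -> nat) (xi : nat -> iterm) : Prop :=
  forall al, wf ar (xi al) /\ (forall b, ~~ hasSO b (xi al)).

Definition is_model (J : interp) (xi : nat -> iterm) (Phi : socp) : Prop :=
  (forall a b, List.In (Ineq a b) Phi -> leJ J (subst xi a) (subst xi b)) /\
  (forall i al, List.In (NotOcc i al) Phi -> ~~ hasVar i (xi al)).

Definition occurs_in (al : nat) (Phi : socp) : Prop :=
  (exists a b, List.In (Ineq a b) Phi /\ (hasSO al a || hasSO al b)) \/
  (exists i, List.In (NotOcc i al) Phi).

(* V(beta): least sets with  Var(a) <= V(beta) and V(alpha) <= V(beta) for
   alpha in SOVar(a), whenever (a <= b) in Phi and beta in SOVar(b). *)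
Inductive inV (Phi : socp) : nat -> nat -> Prop :=
| inV_var a b i be :
    List.In (Ineq a b) Phi -> hasSO be b -> hasVar i a -> inV Phi i be
| inV_so a b i al be :
    List.In (Ineq a b) Phi -> hasSO be b -> hasSO al a -> inV Phi i al ->
    inV Phi i be.

Definition inSV (Phi : socp) (i be : nat) : Prop :=
  inV Phi i be /\ ~ List.In (NotOcc i be) Phi.

From mathcomp Require Import all_boot.
From Stdlib Require Import ClassicalEpsilon.
Set Implicit Arguments.
Unset Strict Implicit.

(* Replace in each xi(alpha) every index variable outside SV(alpha) by 0.
   For a constraint a <= b, evaluate both sides under the environment that
   keeps only the variables lying in V(beta) for every beta in SOVar(b).
   On the left this loses nothing: by the closure rules of V, the variables
   of a and of SV(alpha) for alpha in SOVar(a) all lie there.  On the right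
   it can only decrease values: a surviving variable of xi(beta) is in
   V(beta), and not excluded by an occurrence constraint since xi satisfies
   them, so it is in SV(beta).  Monotonicity of J closes the chain. *)

Definition iterm_nested_ind (P : iterm -> Prop)
  (HV : forall n, P (IVar n)) (HS : forall n, P (ISO n)) (HZ : P IZero)
  (HSu : forall a, P a -> P (ISucc a))
  (HP : forall a b, P a -> P b -> P (IPlus a b))
  (HF : forall g ts, (forall t, List.In t ts -> P t) -> P (IFun g ts)) :
  forall t, P t :=
  fix F t := match t with
  | IVar n => HV n | ISO n => HS n | IZero => HZ
  | ISucc a => HSu a (F a) | IPlus a b => HP a b (F a) (F b)
  | IFun g ts => HF g ts
      ((fix G (us : seq iterm) : forall t, List.In t us -> P t :=
         match us with
         | nil => fun t H => False_ind _ H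
         | cons u us' => fun t H => match H with
             | or_introl e => eq_ind u P (F u) t e
             | or_intror h => G us' t h end
         end) ts)
  end.

Section InLists.
Variables (T U : Type).

Lemma eq_map_In (f g : T -> U) s :
  (forall t, List.In t s -> f t = g t) -> map f s = map g s.
Proof. by elim: s => //= x s IH H; rewrite H ?IH //; auto. Qed.

Lemma eq_all_In (p q : pred T) s :
  (forall t, List.In t s -> p t = q t) -> all p s = all q s.
Proof. by elim: s => //= x s IH H; rewrite H ?IH //; auto. Qed.

Lemma eq_has_In (p q : pred T) s :
  (forall t, List.In t s -> p t = q t) -> has p s = has q s.
Proof. by elim: s => //= x s IH H; rewrite H ?IH //; auto. Qed.

Lemma allP_In (p : pred T) s t : all p s -> List.In t s -> p t.
Proof. by elim: s => //= x s IH /andP[px ps] [<-|]; auto. Qed.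

Lemma hasP_In (p : pred T) s t : List.In t s -> p t -> has p s.
Proof. by elim: s => //= x s IH [<- ->|/IH h /h ->]; rewrite ?orbT. Qed.

Lemma all2_leq_map_In (f g : T -> nat) s :
  (forall t, List.In t s -> f t <= g t) -> all2 leq (map f s) (map g s).
Proof. by elim: s => //= x s IH H; rewrite H ?IH //; auto. Qed.

End InLists.

Definition prop_pred (T : Type) (P : T -> Prop) : pred T :=
  fun x => if excluded_middle_informative (P x) then true else false.

Lemma prop_predP (T : Type) (P : T -> Prop) x : reflect (P x) (prop_pred P x).
Proof. by rewrite /prop_pred; case: excluded_middle_informative; constructor. Qed.

Lemma subst_ISO t : subst ISO t = t.
Proof.
elim/iterm_nested_ind: t => //= [a -> | a b -> -> | g ts IH] //.
by rewrite (eq_map_In IH) map_id.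
Qed.

Section Restriction.
Variable P : pred nat.

Fixpoint restrict_vars (t : iterm) : iterm :=
  match t with
  | IVar j => if P j then IVar j else IZero
  | ISO b => ISO b
  | IZero => IZero
  | ISucc a => ISucc (restrict_vars a)
  | IPlus a b => IPlus (restrict_vars a) (restrict_vars b)
  | IFun g ts => IFun g (map restrict_vars ts)
  end.

Definition restrict_env (rho : nat -> nat) i := if P i then rho i else 0.

Lemma restrict_env_le rho i : restrict_env rho i <= rho i.
Proof. by rewrite /restrict_env; case: (P i). Qed.

Lemma wf_restrict_vars ar t : wf ar (restrict_vars t) = wf ar t.
Proof.
elim/iterm_nested_ind: t => //= [n | a b -> -> | g ts IH] //.
- by case: (P n).
- by rewrite size_map all_map (eq_all_In IH).
Qed.

Lemma hasSO_restrict_vars al t : hasSO al (restrict_vars t) = hasSO al t.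
Proof.
elim/iterm_nested_ind: t => //= [n | a b -> -> | g ts IH] //.
- by case: (P n).
- by rewrite has_map (eq_has_In IH).
Qed.

Lemma hasVar_restrict_vars i t : hasVar i (restrict_vars t) = P i && hasVar i t.
Proof.
elim/iterm_nested_ind: t => /= [n | n | | a -> | a b -> -> | g ts IH].
- by case: ifP => Pn /=; case: eqP => [<-|_]; rewrite ?Pn ?andbF.
- by rewrite andbF.
- by rewrite andbF.
- by [].
- by rewrite andb_orr.
- rewrite has_map (eq_has_In IH) /=.
  by case: (P i) => //; elim: ts {IH}.
Qed.

Lemma eval_restrict_vars J rho t :
  eval J rho (restrict_vars t) = eval J (restrict_env rho) t.
Proof.
elim/iterm_nested_ind: t => //= [n | a -> | a b -> -> | g ts IH] //.
- by rewrite /restrict_env; case: (P n).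
- by rewrite -map_comp (eq_map_In IH).
Qed.

End Restriction.

Section MonotoneEvaluation.
Variables (ar : nat -> nat) (J : interp).
Hypothesis J_mono : weakly_monotone ar J.

Lemma eval_subst_mono rho1 rho2 x1 x2 t :
  wf ar t -> (forall i, hasVar i t -> rho1 i <= rho2 i) ->
  (forall al, hasSO al t -> eval J rho1 (x1 al) <= eval J rho2 (x2 al)) ->
  eval J rho1 (subst x1 t) <= eval J rho2 (subst x2 t).
Proof.
elim/iterm_nested_ind: t => /= [n _ le_rho _ | n _ _ le_x | | a IH | a b IHa IHb | g ts IH].
- by apply: le_rho; rewrite eqxx.
- by apply: le_x; rewrite eqxx.
- by [].
- by rewrite ltnS; apply: IH.
- move=> /andP[wa wb] le_rho le_x; apply: leq_add.
  + by apply: IHa => // [i h|al h]; [apply: le_rho|apply: le_x]; rewrite h.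
  + by apply: IHb => // [i h|al h]; [apply: le_rho|apply: le_x]; rewrite h orbT.
- move=> /andP[/eqP size_ts wf_ts] le_rho le_x; rewrite -!map_comp.
  apply: J_mono; rewrite ?size_map //.
  apply: all2_leq_map_In => t t_in /=; apply: IH => //.
  + exact: allP_In wf_ts t_in.
  + by move=> i h; apply: le_rho; apply: hasP_In t_in h.
  + by move=> al h; apply: le_x; apply: hasP_In t_in h.
Qed.

Lemma eval_mono rho1 rho2 t :
  wf ar t -> (forall i, hasVar i t -> rho1 i <= rho2 i) ->
  eval J rho1 t <= eval J rho2 t.
Proof. by move=> wf_t le_rho; rewrite -(subst_ISO t); apply: eval_subst_mono. Qed.

End MonotoneEvaluation.

Section SkolemReduction.
Variables (ar : nat -> nat) (J : interp) (Phi : socp) (xi : nat -> iterm).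
Hypotheses (J_mono : weakly_monotone ar J) (wf_Phi : wf_socp ar Phi).
Hypothesis xi_so : so_subst ar xi.
Hypothesis xi_NotOcc : forall i al, List.In (NotOcc i al) Phi -> ~~ hasVar i (xi al).

Definition skolem_restriction (al : nat) : iterm :=
  restrict_vars (prop_pred (inSV Phi ^~ al)) (xi al).

Definition common_V (b : iterm) : pred nat :=
  prop_pred (fun i => forall be, hasSO be b -> inV Phi i be).

Lemma so_subst_skolem_restriction : so_subst ar skolem_restriction.
Proof.
move=> al; have [wf_xi noSO_xi] := xi_so al.
by split=> [|b]; rewrite ?wf_restrict_vars ?hasSO_restrict_vars.
Qed.

Lemma hasVar_skolem_restriction i al :
  hasVar i (skolem_restriction al) -> inSV Phi i al.
Proof. by rewrite hasVar_restrict_vars => /andP[/prop_predP]. Qed.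

Lemma skolem_restriction_NotOcc i al :
  List.In (NotOcc i al) Phi -> ~~ hasVar i (skolem_restriction al).
Proof. by move=> /xi_NotOcc; rewrite hasVar_restrict_vars => /negbTE ->; rewrite andbF. Qed.

Lemma eval_skolem_restriction_lhs a b rho :
  List.In (Ineq a b) Phi ->
  eval J rho (subst skolem_restriction a)
    <= eval J (restrict_env (common_V b) rho) (subst xi a).
Proof.
move=> ab_in; have [wf_a _] := wf_Phi ab_in.
apply: (eval_subst_mono J_mono) => // [i i_a | al al_a].
- rewrite /restrict_env.
  have -> : common_V b i by apply/prop_predP => be /(inV_var ab_in)/(_ i_a).
  exact: leqnn.
- rewrite eval_restrict_vars; apply: (eval_mono J_mono) => [|i _].
    by have [] := xi_so al.
  rewrite /restrict_env; case: ifP => // /prop_predP[i_V _].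
  have -> // : common_V b i.
  by apply/prop_predP => be be_b; apply: inV_so ab_in be_b al_a i_V.
Qed.

Lemma eval_skolem_restriction_rhs a b rho :
  List.In (Ineq a b) Phi ->
  eval J (restrict_env (common_V b) rho) (subst xi b)
    <= eval J rho (subst skolem_restriction b).
Proof.
move=> ab_in; have [_ wf_b] := wf_Phi ab_in.
apply: (eval_subst_mono J_mono) => // [i _ | be be_b]; first exact: restrict_env_le.
rewrite eval_restrict_vars; apply: (eval_mono J_mono) => [|i i_xi].
  by have [] := xi_so be.
rewrite /restrict_env; case: ifP => // /prop_predP i_V.
have -> // : prop_pred (inSV Phi ^~ be) i.
by apply/prop_predP; split=> [|/xi_NotOcc]; [apply: i_V | rewrite i_xi].
Qed.

End SkolemReduction.

Theorem mainTheorem10 (ar : nat -> nat) (J : interp) (Phi : socp)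
    (xi : nat -> iterm) :
  weakly_monotone ar J ->
  wf_socp ar Phi ->
  so_subst ar xi ->
  is_model J xi Phi ->
  exists xr : nat -> iterm,
    so_subst ar xr /\ is_model J xr Phi /\
    (forall al, occurs_in al Phi ->
       forall i, hasVar i (xr al) -> inSV Phi i al).
Proof.
move=> J_mono wf_Phi xi_so [xi_Ineq xi_NotOcc].
exists (skolem_restriction Phi xi); split; last split.
- exact: so_subst_skolem_restriction.
- split=> [a b ab_in rho | i al]; last exact: skolem_restriction_NotOcc.
  have lhs := eval_skolem_restriction_lhs J_mono wf_Phi xi_so rho ab_in.
  have rhs := eval_skolem_restriction_rhs J_mono wf_Phi xi_so xi_NotOcc rho ab_in.
  exact: leq_trans lhs (leq_trans (xi_Ineq _ _ ab_in _) rhs).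
- by move=> al _ i; apply: hasVar_skolem_restriction.
Qed.
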